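(* Let $\mathbf{M}$ be a unital commutative distributive $\ell$-monoid. Then $\mathbf{M}$ is isomorphic to a subalgebra of the $\{+,\vee,\wedge,0,1,-1\}$-reduct of a unital abelian $\ell$-group if and only if $\Gamma(\mathbf{M})$ is isomorphic to a subalgebra of the $\{\oplus,\odot,\vee,\wedge,0,1\}$-reduct of an MV-algebra.
   Context: A \emph{unital commutative distributive $\ell$-monoid} is an algebra $\langle M,+,\vee,\wedge,0,1,-1\rangle$ (arities $2,2,2,0,0,0$) such that: $\langle M,\vee,\wedge\rangle$ is a distributive lattice (with order $\le$); $\langle M,+,0\rangle$ is a commutative monoid; $+$ distributes over $\vee$ and $\wedge$; $-1+1=0$; $-1\le 0\le 1$; and for every $x\in M$ there is $n\in\mathbb{N}\setminus\{0\}$ with $(-1)+\dots+(-1)\le x\le 1+\dots+1$ ($n$ summands each). $\Gamma(\mathbf{M})$ denotes $\{x\in M\mid 0\le x\le 1\}$ with $\vee,\wedge,0,1$ restricted and $x\oplus y:=(x+y)\wedge 1$, $x\odot y:=(x+y+(-1))\vee 0$. MV-algebras are taken in the signature $\{\oplus,\odot,\vee,\wedge,\neg,0,1\}$ with $1=\neg0$, $x\odot y=\neg(\neg x\oplus\neg y)$, $x\vee y=(x\odot\neg y)\oplus y$, $x\wedge y=\neg(\neg x\vee\neg y)$. A unital abelian $\ell$-group is a commutative lattice-ordered group with a distinguished strong unit $1\ge 0$ (for every $g$ some $n$ has $g\le n\cdot 1$), with $-1$ its inverse. *)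

From Stdlib Require Import Arith.

Set Implicit Arguments.

Record UCDLMonoid (M : Type) := {
  m_add  : M -> M -> M;
  m_join : M -> M -> M;
  m_meet : M -> M -> M;
  m_zero : M;
  m_one  : M;
  m_mone : M;
  m_joinA : forall x y z, m_join x (m_join y z) = m_join (m_join x y) z;
  m_meetA : forall x y z, m_meet x (m_meet y z) = m_meet (m_meet x y) z;
  m_joinC : forall x y, m_join x y = m_join y x;
  m_meetC : forall x y, m_meet x y = m_meet y x;
  m_absJ  : forall x y, m_join x (m_meet x y) = x;
  m_absM  : forall x y, m_meet x (m_join x y) = x;
  m_distr : forall x y z, m_meet x (m_join y z) = m_join (m_meet x y) (m_meet x z);
  m_addA : forall x y z, m_add x (m_add y z) = m_add (m_add x y) z;
  m_addC : forall x y, m_add x y = m_add y x;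
  m_add0 : forall x, m_add x m_zero = x;
  m_addJ : forall x y z, m_add x (m_join y z) = m_join (m_add x y) (m_add x z);
  m_addM : forall x y z, m_add x (m_meet y z) = m_meet (m_add x y) (m_add x z);
  m_mone_one : m_add m_mone m_one = m_zero;
  (* -1 <= 0 <= 1  (x <= y  iff  x \/ y = y) *)
  m_mone_le0 : m_join m_mone m_zero = m_zero;
  m_zero_le1 : m_join m_zero m_one = m_one;
  m_bounded : forall x, exists n, 0 < n /\
     m_join (Nat.iter n (m_add m_mone) m_zero) x = x /\
     m_join x (Nat.iter n (m_add m_one) m_zero) = Nat.iter n (m_add m_one) m_zero
}.

Definition m_le (M : Type) (A : UCDLMonoid M) (x y : M) : Prop := m_join A x y = y.

Record UAbLGroup (G : Type) := {
  g_add  : G -> G -> G;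
  g_opp  : G -> G;
  g_zero : G;
  g_join : G -> G -> G;
  g_meet : G -> G -> G;
  g_one  : G;
  g_addA : forall x y z, g_add x (g_add y z) = g_add (g_add x y) z;
  g_addC : forall x y, g_add x y = g_add y x;
  g_add0 : forall x, g_add x g_zero = x;
  g_addN : forall x, g_add x (g_opp x) = g_zero;
  g_joinA : forall x y z, g_join x (g_join y z) = g_join (g_join x y) z;
  g_meetA : forall x y z, g_meet x (g_meet y z) = g_meet (g_meet x y) z;
  g_joinC : forall x y, g_join x y = g_join y x;
  g_meetC : forall x y, g_meet x y = g_meet y x;
  g_absJ  : forall x y, g_join x (g_meet x y) = x;
  g_absM  : forall x y, g_meet x (g_join x y) = x;
  g_mono : forall x y z, g_join x y = y -> g_join (g_add x z) (g_add y z) = g_add y z;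
  g_one_ge0 : g_join g_zero g_one = g_one;
  g_strong : forall x, exists n,
     g_join x (Nat.iter n (g_add g_one) g_zero) = Nat.iter n (g_add g_one) g_zero
}.

Record MVAlgebra (A : Type) := {
  mv_oplus : A -> A -> A;
  mv_odot  : A -> A -> A;
  mv_join  : A -> A -> A;
  mv_meet  : A -> A -> A;
  mv_neg   : A -> A;
  mv_zero  : A;
  mv_one   : A;
  mv_oplusA : forall x y z, mv_oplus x (mv_oplus y z) = mv_oplus (mv_oplus x y) z;
  mv_oplusC : forall x y, mv_oplus x y = mv_oplus y x;
  mv_oplus0 : forall x, mv_oplus x mv_zero = x;
  mv_negK   : forall x, mv_neg (mv_neg x) = x;
  mv_oplus_neg0 : forall x, mv_oplus x (mv_neg mv_zero) = mv_neg mv_zero;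
  mv_luk : forall x y, mv_oplus (mv_neg (mv_oplus (mv_neg x) y)) y
                     = mv_oplus (mv_neg (mv_oplus (mv_neg y) x)) x;
  mv_oneE  : mv_one = mv_neg mv_zero;
  mv_odotE : forall x y, mv_odot x y = mv_neg (mv_oplus (mv_neg x) (mv_neg y));
  mv_joinE : forall x y, mv_join x y = mv_oplus (mv_odot x (mv_neg y)) y;
  mv_meetE : forall x y, mv_meet x y = mv_neg (mv_join (mv_neg x) (mv_neg y))
}.

Definition embeds_in_ulgroup (M : Type) (A : UCDLMonoid M) : Prop :=
  exists (G : Type) (L : UAbLGroup G) (f : M -> G),
    (forall x y, f x = f y -> x = y) /\
    (forall x y, f (m_add A x y) = g_add L (f x) (f y)) /\
    (forall x y, f (m_join A x y) = g_join L (f x) (f y)) /\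
    (forall x y, f (m_meet A x y) = g_meet L (f x) (f y)) /\
    f (m_zero A) = g_zero L /\
    f (m_one A) = g_one L /\
    f (m_mone A) = g_opp L (g_one L).

Definition in_Gamma (M : Type) (A : UCDLMonoid M) (x : M) : Prop :=
  m_le A (m_zero A) x /\ m_le A x (m_one A).

Definition Gamma_oplus (M : Type) (A : UCDLMonoid M) (x y : M) : M :=
  m_meet A (m_add A x y) (m_one A).

Definition Gamma_odot (M : Type) (A : UCDLMonoid M) (x y : M) : M :=
  m_join A (m_add A (m_add A x y) (m_mone A)) (m_zero A).

(** Gamma(M) embeds into the {(+),(.),\/,/\,0,1}-reduct of an MV-algebra:
    a map defined on M whose restriction to Gamma(M) is an injective
    homomorphism (only its values on Gamma(M) matter). *)
Definition Gamma_embeds_in_MV (M : Type) (A : UCDLMonoid M) : Prop :=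
  exists (B : Type) (V : MVAlgebra B) (f : M -> B),
    (forall x y, in_Gamma A x -> in_Gamma A y -> f x = f y -> x = y) /\
    (forall x y, in_Gamma A x -> in_Gamma A y ->
       f (Gamma_oplus A x y) = mv_oplus V (f x) (f y)) /\
    (forall x y, in_Gamma A x -> in_Gamma A y ->
       f (Gamma_odot A x y) = mv_odot V (f x) (f y)) /\
    (forall x y, in_Gamma A x -> in_Gamma A y ->
       f (m_join A x y) = mv_join V (f x) (f y)) /\
    (forall x y, in_Gamma A x -> in_Gamma A y ->
       f (m_meet A x y) = mv_meet V (f x) (f y)) /\
    f (m_zero A) = mv_zero V /\
    f (m_one A) = mv_one V.

From Stdlib Require Import List Arith RelationClasses ClassicalEpsilon ProofIrrelevance
  FunctionalExtensionality PropExtensionality.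
Set Implicit Arguments.

(* A cancellative M embeds in its Grothendieck group of formal differences a - b, ordered by
   a - b <= c - d iff a + d <= c + b, which is a unital abelian l-group.  Cancellation by an
   arbitrary c reduces to cancellation by elements of Gamma(M), peeling c = (c /\ 1) +
   ((c - 1) \/ 0) off one unit at a time; and Gamma(M) is cancellative as soon as it embeds
   in an MV-algebra, where x is determined by x (+) z and x (.) z.  Conversely, the unit
   interval of a unital l-group is an MV-algebra, and an embedding of M restricts to it on
   Gamma(M). *)

Section Lattice.
Variables (T : Type) (join meet : T -> T -> T).

Record lattice_laws : Prop := LatticeLaws {
  joinA : forall x y z, join x (join y z) = join (join x y) z;
  meetA : forall x y z, meet x (meet y z) = meet (meet x y) z;
  joinC : forall x y, join x y = join y x;
  meetC : forall x y, meet x y = meet y x;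
  join_meetK : forall x y, join x (meet x y) = x;
  meet_joinK : forall x y, meet x (join x y) = x }.

Definition le x y := join x y = y.

Hypothesis L : lattice_laws.

Lemma le_refl x : le x x.
Proof.
  unfold le. rewrite <- (meet_joinK L x x) at 2. apply (join_meetK L).
Qed.

Lemma le_trans x y z : le x y -> le y z -> le x z.
Proof. unfold le. intros Hxy Hyz. rewrite <- Hyz, (joinA L), Hxy. reflexivity. Qed.

Lemma le_anti x y : le x y -> le y x -> x = y.
Proof. unfold le. intros Hxy Hyx. rewrite <- Hyx, (joinC L). exact Hxy. Qed.

Lemma le_joinl x y : le x (join x y).
Proof. unfold le. rewrite (joinA L). f_equal. apply le_refl. Qed.

Lemma le_joinr x y : le y (join x y).
Proof. rewrite (joinC L). apply le_joinl. Qed.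

Lemma join_lub x y z : le x z -> le y z -> le (join x y) z.
Proof. unfold le. intros Hxz Hyz. rewrite <- (joinA L), Hyz, Hxz. reflexivity. Qed.

Lemma le_meetE x y : le x y <-> meet x y = x.
Proof.
  unfold le. split; intro H.
  - rewrite <- H. apply (meet_joinK L).
  - rewrite <- H, (joinC L), (meetC L). apply (join_meetK L).
Qed.

Lemma le_meetl x y : le (meet x y) x.
Proof.
  apply le_meetE. rewrite (meetC L), (meetA L), (proj1 (le_meetE x x) (le_refl x)).
  reflexivity.
Qed.

Lemma le_meetr x y : le (meet x y) y.
Proof. rewrite (meetC L). apply le_meetl. Qed.

Lemma meet_glb x y z : le z x -> le z y -> le z (meet x y).
Proof.
  rewrite !le_meetE. intros Hzx Hzy. rewrite (meetA L), Hzx, Hzy. reflexivity.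
Qed.
End Lattice.

Section LatticeOfOrder.
Variables (T : Type) (R : T -> T -> Prop) (join meet : T -> T -> T).
Hypotheses (R_refl : forall x, R x x) (R_trans : forall x y z, R x y -> R y z -> R x z)
  (R_anti : forall x y, R x y -> R y x -> x = y)
  (R_joinl : forall x y, R x (join x y)) (R_joinr : forall x y, R y (join x y))
  (R_join_lub : forall x y z, R x z -> R y z -> R (join x y) z)
  (R_meetl : forall x y, R (meet x y) x) (R_meetr : forall x y, R (meet x y) y)
  (R_meet_glb : forall x y z, R z x -> R z y -> R z (meet x y)).

Lemma lattice_of_order : lattice_laws join meet.
Proof.
  split; intros; apply R_anti;
    repeat first [apply R_join_lub | apply R_meet_glb]; eauto 6.
Qed.
End LatticeOfOrder.

Section CommMonoid.
Variables (T : Type) (add : T -> T -> T) (zero : T).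

Record comm_monoid_laws : Prop := CommMonoidLaws {
  addA : forall x y z, add x (add y z) = add (add x y) z;
  addC : forall x y, add x y = add y x;
  add0 : forall x, add x zero = x }.

Hypothesis C : comm_monoid_laws.

Lemma add0l x : add zero x = x.
Proof. rewrite (addC C). apply (add0 C). Qed.

Lemma addCA x y z : add x (add y z) = add y (add x z).
Proof. rewrite !(addA C), ((addC C) x y). reflexivity. Qed.

Lemma addACA x y z w : add (add x y) (add z w) = add (add x z) (add y w).
Proof. rewrite <- !(addA C). f_equal. apply addCA. Qed.
End CommMonoid.

Section ACNormalization.
Variables (T : Type) (add : T -> T -> T) (zero : T).
Hypothesis C : comm_monoid_laws add zero.

Inductive ac_term := ac_var (n : nat) | ac_add (s t : ac_term) | ac_zero.

Fixpoint ac_eval (env : list T) (t : ac_term) : T :=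
  match t with
  | ac_var n => nth n env zero
  | ac_add s t => add (ac_eval env s) (ac_eval env t)
  | ac_zero => zero
  end.

Fixpoint ac_vars (t : ac_term) : list nat :=
  match t with ac_var n => n :: nil | ac_add s t => ac_vars s ++ ac_vars t | ac_zero => nil end.

Definition sum_vars (env : list T) (l : list nat) : T :=
  fold_right (fun n acc => add (nth n env zero) acc) zero l.

Fixpoint insert_sorted (n : nat) (l : list nat) : list nat :=
  match l with
  | nil => n :: nil
  | m :: l' => if n <=? m then n :: l else m :: insert_sorted n l'
  end.

Definition sort_nat : list nat -> list nat := fold_right insert_sorted nil.

Lemma sum_vars_app env l1 l2 : sum_vars env (l1 ++ l2) = add (sum_vars env l1) (sum_vars env l2).
Proof.
  induction l1 as [|n l1 IH]; simpl.
  - symmetry. apply (add0l C).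
  - rewrite IH. apply (addA C).
Qed.

Lemma ac_eval_vars env t : ac_eval env t = sum_vars env (ac_vars t).
Proof.
  induction t as [n|s IHs t IHt|]; simpl.
  - symmetry. apply (add0 C).
  - rewrite sum_vars_app, IHs, IHt. reflexivity.
  - reflexivity.
Qed.

Lemma sum_vars_insert env n l :
  sum_vars env (insert_sorted n l) = add (nth n env zero) (sum_vars env l).
Proof.
  induction l as [|m l IH]; simpl; [reflexivity|].
  destruct (n <=? m); simpl; [reflexivity|].
  rewrite IH, !(addA C), ((addC C) (nth m env zero)). reflexivity.
Qed.

Lemma sum_vars_sort env l : sum_vars env (sort_nat l) = sum_vars env l.
Proof.
  induction l as [|n l IH]; simpl; [reflexivity|].
  rewrite sum_vars_insert, IH. reflexivity.
Qed.

Lemma ac_eval_sort env s t :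
  sort_nat (ac_vars s) = sort_nat (ac_vars t) -> ac_eval env s = ac_eval env t.
Proof.
  intro H. rewrite !ac_eval_vars, <- (sum_vars_sort env (ac_vars s)), H.
  apply sum_vars_sort.
Qed.
End ACNormalization.

Ltac ac_index x env :=
  lazymatch env with
  | x :: _ => constr:(O)
  | _ :: ?env' => let n := ac_index x env' in constr:(S n)
  end.

Ltac ac_atoms add zero t env :=
  lazymatch t with
  | add ?s ?u => let env := ac_atoms add zero s env in ac_atoms add zero u env
  | zero => env
  | _ => match constr:(tt) with
         | _ => let _ := ac_index t env in env
         | _ => constr:(t :: env)
         end
  end.

Ltac ac_reify add zero env t :=
  lazymatch t with
  | add ?s ?u =>
      let rs := ac_reify add zero env s in let ru := ac_reify add zero env u in
      constr:(ac_add rs ru)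
  | zero => constr:(ac_zero)
  | _ => let n := ac_index t env in constr:(ac_var n)
  end.

(* Closes an equation between sums in the commutative monoid C by reflection: both sides are
   reified over a common list of atoms and their sorted lists of atom indices compared. *)
Ltac ac_reflexivity C :=
  lazymatch type of C with
  | @comm_monoid_laws ?T ?add ?zero =>
    lazymatch goal with
    | |- ?X = ?Y =>
      let env := ac_atoms add zero X (@nil T) in
      let env := ac_atoms add zero Y env in
      let rx := ac_reify add zero env X in
      let ry := ac_reify add zero env Y in
      change (ac_eval add zero env rx = ac_eval add zero env ry);
      apply (ac_eval_sort C); vm_compute; reflexivity
    end
  end.

Section OrderedMonoid.
Variables (T : Type) (join meet add : T -> T -> T) (zero : T).
Hypotheses (L : lattice_laws join meet) (C : comm_monoid_laws add zero)
  (le_add : forall x y z, le join x y -> le join (add x z) (add y z)).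

Lemma le_add2 x y z w : le join x y -> le join z w -> le join (add x z) (add y w).
Proof.
  intros Hxy Hzw. apply (le_trans L) with (add y z); [now apply le_add|].
  rewrite ((addC C) y z), ((addC C) y w). now apply le_add.
Qed.
End OrderedMonoid.

Section Quotient.
Variables (T : Type) (R : T -> T -> Prop) (E : Equivalence R).

Definition canon (t : T) : T := epsilon (inhabits t) (fun s => R s t).

Lemma canon_R t : R (canon t) t.
Proof. apply (epsilon_spec (inhabits t) (fun s => R s t)). exists t. reflexivity. Qed.

Lemma canon_eq t s : R t s -> canon t = canon s.
Proof.
  intro Hts. unfold canon.
  assert (Hclass : (fun u => R u t) = (fun u => R u s)).
  { apply functional_extensionality. intro u.
    apply propositional_extensionality. split; intro Hu; rewrite Hu; [|symmetry]; exact Hts. }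
  rewrite Hclass. f_equal. apply proof_irrelevance.
Qed.

Definition quot := {t : T | canon t = t}.

Definition class (t : T) : quot := exist _ (canon t) (canon_eq (canon_R t)).

Definition repr (q : quot) : T := proj1_sig q.

Lemma repr_class t : R (repr (class t)) t.
Proof. apply canon_R. Qed.

Lemma class_eqP t s : class t = class s <-> R t s.
Proof.
  split; intro H.
  - rewrite <- (repr_class t), <- (repr_class s), H. reflexivity.
  - apply subset_eq_compat, canon_eq, H.
Qed.

Lemma class_surj q : exists t, q = class t.
Proof.
  destruct q as [t Ht]. exists t. apply subset_eq_compat. symmetry. exact Ht.
Qed.

Lemma class_lift1 (f : T -> T) (Hf : forall t t', R t t' -> R (f t) (f t')) t :
  class (f (repr (class t))) = class (f t).
Proof. apply class_eqP, Hf, repr_class. Qed.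

Lemma class_lift2 (f : T -> T -> T)
  (Hf : forall t t' s s', R t t' -> R s s' -> R (f t s) (f t' s')) t s :
  class (f (repr (class t)) (repr (class s))) = class (f t s).
Proof. apply class_eqP, Hf; apply repr_class. Qed.
End Quotient.

Section MVCancellation.
Variables (B : Type) (V : MVAlgebra B).
Local Notation "x ⊕ y" := (mv_oplus V x y) (at level 50, left associativity).
Local Notation "x ⊙ y" := (mv_odot V x y) (at level 40, left associativity).
Local Notation "¬ x" := (mv_neg V x) (at level 35, right associativity).
Local Notation "0" := (mv_zero V).

Lemma mv_oplus0l x : 0 ⊕ x = x.
Proof. rewrite mv_oplusC. apply mv_oplus0. Qed.

Lemma mv_oplusNx x : ¬ x ⊕ x = ¬ 0.
Proof.
  pose proof (mv_luk V (¬ 0) x) as H.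
  rewrite mv_negK, mv_oplus0l, (mv_oplus_neg0 V (¬ x)), mv_negK, mv_oplus0l in H.
  exact H.
Qed.

Lemma mv_oplus_odot_decomp x y : x = (x ⊕ y) ⊙ ¬ y ⊕ x ⊙ y.
Proof.
  assert (Hleft : (x ⊕ y) ⊙ ¬ y = ¬ (¬ x ⊕ x ⊙ y)).
  { rewrite (mv_odotE V (x ⊕ y)), mv_negK. f_equal.
    pose proof (mv_luk V y (¬ x)) as Hluk. rewrite mv_negK in Hluk.
    rewrite <- Hluk, mv_odotE, mv_oplusC, (mv_oplusC V (¬ y)). reflexivity. }
  rewrite Hleft, mv_luk, mv_odotE, mv_negK.
  rewrite <- mv_oplusA, (mv_oplusC V (¬ y) x), mv_oplusA, mv_oplusNx.
  rewrite (mv_oplusC V (¬ 0)), mv_oplus_neg0, mv_negK, mv_oplus0l. reflexivity.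
Qed.

Lemma mv_cancel x y z : x ⊕ z = y ⊕ z -> x ⊙ z = y ⊙ z -> x = y.
Proof.
  intros Hoplus Hodot.
  rewrite (mv_oplus_odot_decomp x z), (mv_oplus_odot_decomp y z), Hoplus, Hodot.
  reflexivity.
Qed.
End MVCancellation.
Definition m_lattice M (A : UCDLMonoid M) : lattice_laws (m_join A) (m_meet A) :=
  {| joinA := m_joinA A; meetA := m_meetA A; joinC := m_joinC A; meetC := m_meetC A;
     join_meetK := m_absJ A; meet_joinK := m_absM A |}.

Definition m_monoid M (A : UCDLMonoid M) : comm_monoid_laws (m_add A) (m_zero A) :=
  {| addA := m_addA A; addC := m_addC A; add0 := m_add0 A |}.

Definition cancellative M (A : UCDLMonoid M) : Prop :=
  forall x y z, m_add A x z = m_add A y z -> x = y.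

Definition Gamma_cancellative M (A : UCDLMonoid M) : Prop :=
  forall x y z, in_Gamma A x -> in_Gamma A y -> in_Gamma A z ->
    m_add A x z = m_add A y z -> x = y.

Section UCDLMonoidFacts.
Variables (M : Type) (A : UCDLMonoid M).
Local Notation "x ⊞ y" := (m_add A x y) (at level 50, left associativity).
Local Notation "x ⊔ y" := (m_join A x y) (at level 40, left associativity).
Local Notation "x ⊓ y" := (m_meet A x y) (at level 40, left associativity).
Local Notation "x ≤ y" := (le (m_join A) x y) (at level 70).
Local Notation zero := (m_zero A).
Local Notation one := (m_one A).
Local Notation mone := (m_mone A).
Let ML := m_lattice A.
Let MC := m_monoid A.

Lemma m_addJr x y z : (x ⊔ y) ⊞ z = (x ⊞ z) ⊔ (y ⊞ z).
Proof. rewrite m_addC, m_addJ, !(m_addC A z). reflexivity. Qed.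

Lemma m_addMr x y z : (x ⊓ y) ⊞ z = (x ⊞ z) ⊓ (y ⊞ z).
Proof. rewrite m_addC, m_addM, !(m_addC A z). reflexivity. Qed.

Lemma m_le_add x y z : x ≤ y -> x ⊞ z ≤ y ⊞ z.
Proof. unfold le. intro Hxy. rewrite <- m_addJr, Hxy. reflexivity. Qed.

Lemma m_le_add2 x y z w : x ≤ y -> z ≤ w -> x ⊞ z ≤ y ⊞ w.
Proof. apply (le_add2 ML MC m_le_add). Qed.

Lemma m_add_one_mone x : x ⊞ one ⊞ mone = x.
Proof. rewrite <- m_addA, (m_addC A one), m_mone_one, m_add0. reflexivity. Qed.

Lemma m_add_mone_one x : x ⊞ mone ⊞ one = x.
Proof. rewrite <- m_addA, m_mone_one, m_add0. reflexivity. Qed.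

Definition ones n := Nat.iter n (m_add A one) zero.
Definition mones n := Nat.iter n (m_add A mone) zero.

Lemma ones_add n k : ones n ⊞ ones k = ones (n + k).
Proof.
  induction n as [|n IH]; simpl; [apply (add0l MC)|].
  unfold ones in *. simpl. rewrite <- m_addA, IH. reflexivity.
Qed.

Lemma ones_mones n : ones n ⊞ mones n = zero.
Proof.
  induction n as [|n IH]; [apply m_add0|]. unfold ones, mones in *. simpl.
  rewrite (addACA MC), (m_addC A one), m_mone_one, IH. apply m_add0.
Qed.

Lemma ones_ge0 n : zero ≤ ones n.
Proof.
  induction n as [|n IH]; [apply (le_refl ML)|].
  rewrite <- (m_add0 A zero). apply m_le_add2; [apply m_zero_le1 | exact IH].
Qed.

Lemma mones_le0 n : mones n ≤ zero.
Proof.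
  induction n as [|n IH]; [apply (le_refl ML)|].
  rewrite <- (m_add0 A zero). apply m_le_add2; [apply m_mone_le0 | exact IH].
Qed.

Lemma ones_le_add n k : ones n ≤ ones (n + k).
Proof.
  rewrite <- ones_add, <- (m_add0 A (ones n)) at 1.
  apply m_le_add2; [apply (le_refl ML) | apply ones_ge0].
Qed.

Lemma mones_le_add n k : mones (n + k) ≤ mones n.
Proof.
  unfold mones. rewrite Nat.iter_add.
  induction n as [|n IH]; simpl.
  - apply mones_le0.
  - apply m_le_add2; [apply (le_refl ML) | exact IH].
Qed.

Lemma common_bound x y :
  exists N, mones N ≤ x /\ x ≤ ones N /\ mones N ≤ y /\ y ≤ ones N.
Proof.
  destruct (m_bounded A x) as [n [_ [Hxl Hxu]]].
  destruct (m_bounded A y) as [k [_ [Hyl Hyu]]].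
  exists (n + k). repeat split.
  - exact ((le_trans ML) _ _ _ (mones_le_add n k) Hxl).
  - exact ((le_trans ML) _ _ _ Hxu (ones_le_add n k)).
  - rewrite Nat.add_comm. exact ((le_trans ML) _ _ _ (mones_le_add k n) Hyl).
  - rewrite Nat.add_comm. exact ((le_trans ML) _ _ _ Hyu (ones_le_add k n)).
Qed.

Definition in_interval n x := zero ≤ x /\ x ≤ ones n.

Lemma shift_interval N x :
  mones N ≤ x -> x ≤ ones N -> in_interval (N + N) (x ⊞ ones N).
Proof.
  intros Hl Hu. split.
  - rewrite <- (ones_mones N), m_addC. apply m_le_add. exact Hl.
  - rewrite <- ones_add. apply m_le_add. exact Hu.
Qed.

Lemma add_ones_mones x N : x ⊞ ones N ⊞ mones N = x.
Proof. rewrite <- m_addA, ones_mones. apply m_add0. Qed.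

Definition peel x := (x ⊞ mone) ⊔ zero.

Lemma meet_one_add_peel c : c = (c ⊓ one) ⊞ peel c.
Proof.
  unfold peel. apply (le_anti ML).
  - rewrite m_addMr. apply (meet_glb ML).
    + rewrite m_addJ, m_add0. apply (le_joinr ML).
    + rewrite m_addJ, m_addA, (m_addC A one c), m_add_one_mone. apply (le_joinl ML).
  - rewrite m_addJ, m_add0. apply (join_lub ML); [|apply (le_meetl ML)].
    rewrite m_addMr. apply (le_trans ML) with (one ⊞ (c ⊞ mone)); [apply (le_meetr ML)|].
    rewrite m_addA, (m_addC A one c), m_add_one_mone. apply (le_refl ML).
Qed.

Lemma join_one_peel c : c ⊔ one = peel c ⊞ one.
Proof. unfold peel. rewrite m_addJr, m_add_mone_one, (add0l MC). reflexivity. Qed.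

Lemma peel_interval n c : in_interval (S n) c -> in_interval n (peel c).
Proof.
  intros [_ Hc]. split; [apply (le_joinr ML)|].
  apply (join_lub ML); [|apply ones_ge0].
  apply (le_trans ML) with (ones (S n) ⊞ mone); [apply m_le_add, Hc|].
  unfold ones. simpl. rewrite (m_addC A one), m_add_one_mone. apply (le_refl ML).
Qed.

Lemma meet_one_Gamma x : zero ≤ x -> in_Gamma A (x ⊓ one).
Proof.
  intro Hx. split.
  - apply (meet_glb ML); [exact Hx | apply m_zero_le1].
  - apply (le_meetr ML).
Qed.

Lemma join_meet_cancel x y c : x ⊔ c = y ⊔ c -> x ⊓ c = y ⊓ c -> x = y.
Proof.
  intros Hj Hm. rewrite <- (m_absM A x c), Hj, m_distr, Hm, (m_meetC A x y).
  rewrite <- m_distr, Hj. apply m_absM.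
Qed.

Section GammaCancellation.
Hypothesis Gamma_cancel : Gamma_cancellative A.

Lemma Gamma_cancel_interval n w a b : in_Gamma A w ->
  in_interval n a -> in_interval n b -> a ⊞ w = b ⊞ w -> a = b.
Proof.
  intro Hw. revert a b. induction n as [|n IH]; intros a b Ha Hb Hab.
  - destruct Ha, Hb. transitivity (m_zero A); [|symmetry]; apply (le_anti ML); assumption.
  - apply join_meet_cancel with one.
    + rewrite !join_one_peel. f_equal.
      apply IH; [apply peel_interval; assumption .. |].
      unfold peel. rewrite !m_addJr, !(m_addC A _ w), !m_addA, !(m_addC A w), Hab.
      reflexivity.
    + apply Gamma_cancel with w; 
        [apply meet_one_Gamma, (proj1 Ha) | apply meet_one_Gamma, (proj1 Hb) | exact Hw |].
      rewrite !m_addMr, Hab. reflexivity.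
Qed.

Lemma Gamma_cancel_any w a b : in_Gamma A w -> a ⊞ w = b ⊞ w -> a = b.
Proof.
  intros Hw Hab. destruct (common_bound a b) as [N [Hal [Hau [Hbl Hbu]]]].
  rewrite <- (add_ones_mones a N), <- (add_ones_mones b N). f_equal.
  apply Gamma_cancel_interval with (N + N) w; [exact Hw | apply shift_interval; assumption ..|].
  rewrite !(m_addC A _ (ones N)), <- !m_addA, Hab. reflexivity.
Qed.

Lemma cancel_interval n c a b : in_interval n c -> a ⊞ c = b ⊞ c -> a = b.
Proof.
  revert c. induction n as [|n IH]; intros c Hc Hab.
  - destruct Hc as [Hl Hu]. assert (Hc0 : c = zero) by (apply (le_anti ML); assumption).
    rewrite Hc0, !m_add0 in Hab. exact Hab.
  - apply IH with (peel c); [apply peel_interval, Hc|].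
    apply Gamma_cancel_any with (c ⊓ one); [apply meet_one_Gamma, (proj1 Hc)|].
    rewrite (meet_one_add_peel c) in Hab. rewrite <- !m_addA, (m_addC A (peel c)).
    exact Hab.
Qed.

Lemma cancellative_of_Gamma_cancellative : cancellative A.
Proof.
  intros a b c Hab. destruct (common_bound c c) as [N [Hl [Hu _]]].
  apply cancel_interval with (N + N) (c ⊞ ones N); [apply shift_interval; assumption|].
  rewrite !m_addA, Hab. reflexivity.
Qed.
End GammaCancellation.
End UCDLMonoidFacts.
Section Grothendieck.
Variables (M : Type) (A : UCDLMonoid M).
Hypothesis cancel : cancellative A.
Local Notation "x ⊞ y" := (m_add A x y) (at level 50, left associativity).
Local Notation "x ⊔ y" := (m_join A x y) (at level 40, left associativity).
Local Notation "x ⊓ y" := (m_meet A x y) (at level 40, left associativity).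
Local Notation "x ≤ y" := (le (m_join A) x y) (at level 70).
Local Notation zero := (m_zero A).
Local Notation one := (m_one A).
Local Notation mone := (m_mone A).
Let ML := m_lattice A.
Let MC := m_monoid A.

Lemma m_le_cancel x y z : x ⊞ z ≤ y ⊞ z -> x ≤ y.
Proof. unfold le. intro H. apply cancel with z. rewrite m_addJr. exact H. Qed.

(* A pair [(a, b)] stands for the formal difference [a - b]. *)
Definition pair := (M * M)%type.
Definition peq (p q : pair) := fst p ⊞ snd q = fst q ⊞ snd p.
Definition ple (p q : pair) := fst p ⊞ snd q ≤ fst q ⊞ snd p.
Definition padd (p q : pair) : pair := (fst p ⊞ fst q, snd p ⊞ snd q).
Definition popp (p : pair) : pair := (snd p, fst p).
Definition pjoin (p q : pair) : pair := ((fst p ⊞ snd q) ⊔ (fst q ⊞ snd p), snd p ⊞ snd q).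
Definition pmeet (p q : pair) : pair := ((fst p ⊞ snd q) ⊓ (fst q ⊞ snd p), snd p ⊞ snd q).


Lemma peq_equiv : Equivalence peq.
Proof.
  split.
  - intro p. reflexivity.
  - intros p q. unfold peq. auto.
  - intros [p1 p2] [q1 q2] [r1 r2]. unfold peq. simpl. intros Hpq Hqr.
    apply cancel with (q1 ⊞ q2).
    replace (p1 ⊞ r2 ⊞ (q1 ⊞ q2)) with ((p1 ⊞ q2) ⊞ (q1 ⊞ r2)) by ac_reflexivity MC.
    rewrite Hpq, Hqr. ac_reflexivity MC.
Qed.

Lemma ple_refl p : ple p p.
Proof. apply (le_refl ML). Qed.

Lemma ple_trans p q r : ple p q -> ple q r -> ple p r.
Proof.
  destruct p as [p1 p2], q as [q1 q2], r as [r1 r2]. unfold ple. simpl. intros Hpq Hqr.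
  apply m_le_cancel with (q1 ⊞ q2).
  replace (p1 ⊞ r2 ⊞ (q1 ⊞ q2)) with ((p1 ⊞ q2) ⊞ (q1 ⊞ r2)) by ac_reflexivity MC.
  replace (r1 ⊞ p2 ⊞ (q1 ⊞ q2)) with ((q1 ⊞ p2) ⊞ (r1 ⊞ q2)) by ac_reflexivity MC.
  apply m_le_add2; assumption.
Qed.

Lemma ple_anti p q : ple p q -> ple q p -> peq p q.
Proof. apply (le_anti ML). Qed.

Lemma ple_peq p p' q q' : peq p p' -> peq q q' -> ple p q -> ple p' q'.
Proof.
  intros Hp Hq Hpq.
  assert (Hle : forall r s, peq r s -> ple r s).
  { intros r s Hrs. unfold ple. rewrite Hrs. apply (le_refl ML). }
  apply ple_trans with p; [apply Hle; symmetry; exact Hp|].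
  apply ple_trans with q; [exact Hpq | apply Hle, Hq].
Qed.

Lemma padd_peq p p' q q' : peq p p' -> peq q q' -> peq (padd p q) (padd p' q').
Proof.
  destruct p as [p1 p2], q as [q1 q2], p' as [r1 r2], q' as [s1 s2].
  unfold peq. simpl. intros Hp Hq.
  rewrite (addACA MC p1 q1 r2 s2), Hp, Hq. apply (addACA MC).
Qed.

Lemma popp_peq p p' : peq p p' -> peq (popp p) (popp p').
Proof.
  destruct p as [p1 p2], p' as [r1 r2]. unfold peq. simpl. intro Hp.
  rewrite (m_addC A p2), (m_addC A r2). symmetry. exact Hp.
Qed.

Lemma ple_add p q r : ple p q -> ple (padd p r) (padd q r).
Proof.
  destruct p as [p1 p2], q as [q1 q2], r as [r1 r2]. unfold ple. simpl. intro Hpq.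
  rewrite (addACA MC p1 r1 q2 r2), (addACA MC q1 r1 p2 r2). apply m_le_add, Hpq.
Qed.

Lemma pjoin_l p q : ple p (pjoin p q).
Proof.
  destruct p as [p1 p2], q as [q1 q2]. unfold ple. simpl.
  replace (p1 ⊞ (p2 ⊞ q2)) with (p1 ⊞ q2 ⊞ p2) by ac_reflexivity MC.
  rewrite m_addJr. apply (le_joinl ML).
Qed.

Lemma pjoin_r p q : ple q (pjoin p q).
Proof.
  destruct p as [p1 p2], q as [q1 q2]. unfold ple. simpl.
  rewrite m_addA, m_addJr. apply (le_joinr ML).
Qed.

Lemma pjoin_lub p q r : ple p r -> ple q r -> ple (pjoin p q) r.
Proof.
  destruct p as [p1 p2], q as [q1 q2], r as [r1 r2]. unfold ple. simpl. intros Hpr Hqr.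
  rewrite m_addJr. apply (join_lub ML).
  - replace (p1 ⊞ q2 ⊞ r2) with (p1 ⊞ r2 ⊞ q2) by ac_reflexivity MC.
    replace (r1 ⊞ (p2 ⊞ q2)) with (r1 ⊞ p2 ⊞ q2) by ac_reflexivity MC.
    apply m_le_add, Hpr.
  - replace (q1 ⊞ p2 ⊞ r2) with (q1 ⊞ r2 ⊞ p2) by ac_reflexivity MC.
    replace (r1 ⊞ (p2 ⊞ q2)) with (r1 ⊞ q2 ⊞ p2) by ac_reflexivity MC.
    apply m_le_add, Hqr.
Qed.

Lemma pmeet_l p q : ple (pmeet p q) p.
Proof.
  destruct p as [p1 p2], q as [q1 q2]. unfold ple. simpl.
  replace (p1 ⊞ (p2 ⊞ q2)) with (p1 ⊞ q2 ⊞ p2) by ac_reflexivity MC.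
  rewrite m_addMr. apply (le_meetl ML).
Qed.

Lemma pmeet_r p q : ple (pmeet p q) q.
Proof.
  destruct p as [p1 p2], q as [q1 q2]. unfold ple. simpl.
  rewrite m_addMr, m_addA. apply (le_meetr ML).
Qed.

Lemma pmeet_glb p q r : ple r p -> ple r q -> ple r (pmeet p q).
Proof.
  destruct p as [p1 p2], q as [q1 q2], r as [r1 r2]. unfold ple. simpl. intros Hrp Hrq.
  rewrite m_addMr. apply (meet_glb ML).
  - replace (r1 ⊞ (p2 ⊞ q2)) with (r1 ⊞ p2 ⊞ q2) by ac_reflexivity MC.
    replace (p1 ⊞ q2 ⊞ r2) with (p1 ⊞ r2 ⊞ q2) by ac_reflexivity MC.
    apply m_le_add, Hrp.
  - replace (r1 ⊞ (p2 ⊞ q2)) with (r1 ⊞ q2 ⊞ p2) by ac_reflexivity MC.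
    replace (q1 ⊞ p2 ⊞ r2) with (q1 ⊞ r2 ⊞ p2) by ac_reflexivity MC.
    apply m_le_add, Hrq.
Qed.

Lemma pjoin_peq p p' q q' : peq p p' -> peq q q' -> peq (pjoin p q) (pjoin p' q').
Proof.
  intros Hp Hq. apply ple_anti; apply pjoin_lub.
  - apply ple_peq with p' (pjoin p' q'); [symmetry; exact Hp | reflexivity | apply pjoin_l].
  - apply ple_peq with q' (pjoin p' q'); [symmetry; exact Hq | reflexivity | apply pjoin_r].
  - apply ple_peq with p (pjoin p q); [exact Hp | reflexivity | apply pjoin_l].
  - apply ple_peq with q (pjoin p q); [exact Hq | reflexivity | apply pjoin_r].
Qed.

Lemma pmeet_peq p p' q q' : peq p p' -> peq q q' -> peq (pmeet p q) (pmeet p' q').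
Proof.
  intros Hp Hq. apply ple_anti; apply pmeet_glb.
  - apply ple_peq with (pmeet p q) p; [reflexivity | exact Hp | apply pmeet_l].
  - apply ple_peq with (pmeet p q) q; [reflexivity | exact Hq | apply pmeet_r].
  - apply ple_peq with (pmeet p' q') p'; [reflexivity | symmetry; exact Hp | apply pmeet_l].
  - apply ple_peq with (pmeet p' q') q'; [reflexivity | symmetry; exact Hq | apply pmeet_r].
Qed.

Local Notation cls := (class peq_equiv).
Definition Gr := quot peq.

Definition gadd (x y : Gr) : Gr := cls (padd (repr x) (repr y)).
Definition gopp (x : Gr) : Gr := cls (popp (repr x)).
Definition gjoin (x y : Gr) : Gr := cls (pjoin (repr x) (repr y)).
Definition gmeet (x y : Gr) : Gr := cls (pmeet (repr x) (repr y)).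
Definition gzero : Gr := cls (zero, zero).
Definition gone : Gr := cls (one, zero).
Definition gle (x y : Gr) : Prop := ple (repr x) (repr y).

Lemma gadd_class p q : gadd (cls p) (cls q) = cls (padd p q).
Proof. apply class_lift2, padd_peq. Qed.

Lemma gopp_class p : gopp (cls p) = cls (popp p).
Proof. apply class_lift1, popp_peq. Qed.

Lemma gjoin_class p q : gjoin (cls p) (cls q) = cls (pjoin p q).
Proof. apply class_lift2, pjoin_peq. Qed.

Lemma gmeet_class p q : gmeet (cls p) (cls q) = cls (pmeet p q).
Proof. apply class_lift2, pmeet_peq. Qed.

Lemma gle_class p q : gle (cls p) (cls q) <-> ple p q.
Proof.
  unfold gle. split; intro H.
  - apply ple_peq with (repr (cls p)) (repr (cls q)); [apply (repr_class peq_equiv) .. | exact H].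
  - apply ple_peq with p q; [symmetry; apply (repr_class peq_equiv) .. | exact H].
Qed.

Ltac classes :=
  repeat match goal with x : Gr |- _ =>
    let p := fresh "p" in destruct (class_surj peq_equiv x) as [p ->]
  end.

Lemma gle_refl x : gle x x.
Proof. apply ple_refl. Qed.

Lemma gle_trans x y z : gle x y -> gle y z -> gle x z.
Proof. apply ple_trans. Qed.

Lemma gle_anti x y : gle x y -> gle y x -> x = y.
Proof.
  classes. rewrite !gle_class. intros Hpq Hqp. apply class_eqP, ple_anti; assumption.
Qed.

Lemma gjoin_l x y : gle x (gjoin x y).
Proof. classes. rewrite gjoin_class, gle_class. apply pjoin_l. Qed.

Lemma gjoin_r x y : gle y (gjoin x y).
Proof. classes. rewrite gjoin_class, gle_class. apply pjoin_r. Qed.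

Lemma gjoin_lub x y z : gle x z -> gle y z -> gle (gjoin x y) z.
Proof. classes. rewrite gjoin_class, !gle_class. apply pjoin_lub. Qed.

Lemma gmeet_l x y : gle (gmeet x y) x.
Proof. classes. rewrite gmeet_class, gle_class. apply pmeet_l. Qed.

Lemma gmeet_r x y : gle (gmeet x y) y.
Proof. classes. rewrite gmeet_class, gle_class. apply pmeet_r. Qed.

Lemma gmeet_glb x y z : gle z x -> gle z y -> gle z (gmeet x y).
Proof. classes. rewrite gmeet_class, !gle_class. apply pmeet_glb. Qed.

Lemma gjoinE x y : gjoin x y = y <-> gle x y.
Proof.
  split; intro H.
  - rewrite <- H. apply gjoin_l.
  - apply gle_anti; [apply gjoin_lub; [exact H | apply gle_refl] | apply gjoin_r].
Qed.

Let GrL : lattice_laws gjoin gmeet :=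
  lattice_of_order gle gjoin gmeet gle_refl gle_trans gle_anti gjoin_l gjoin_r gjoin_lub
    gmeet_l gmeet_r gmeet_glb.

Lemma gaddA x y z : gadd x (gadd y z) = gadd (gadd x y) z.
Proof. classes. rewrite !gadd_class. apply class_eqP. unfold peq. simpl. ac_reflexivity MC. Qed.

Lemma gaddC x y : gadd x y = gadd y x.
Proof. classes. rewrite !gadd_class. apply class_eqP. unfold peq. simpl. ac_reflexivity MC. Qed.

Lemma gadd0 x : gadd x gzero = x.
Proof. classes. unfold gzero. rewrite gadd_class. apply class_eqP. unfold peq. simpl. ac_reflexivity MC. Qed.

Lemma gaddN x : gadd x (gopp x) = gzero.
Proof.
  classes. unfold gzero. rewrite gopp_class, gadd_class. apply class_eqP.
  unfold peq. simpl. ac_reflexivity MC.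
Qed.

Lemma gle_add x y z : gjoin x y = y -> gjoin (gadd x z) (gadd y z) = gadd y z.
Proof. rewrite !gjoinE. classes. rewrite !gadd_class, !gle_class. apply ple_add. Qed.

Lemma gone_ge0 : gjoin gzero gone = gone.
Proof.
  apply gjoinE. apply gle_class. unfold ple. simpl. rewrite !m_add0. apply m_zero_le1.
Qed.

Lemma gones n : Nat.iter n (gadd gone) gzero = cls (ones A n, zero).
Proof.
  induction n as [|n IH]; [reflexivity|]. simpl. rewrite IH. unfold gone.
  rewrite gadd_class. apply class_eqP. unfold peq. simpl. rewrite !m_add0. reflexivity.
Qed.

Lemma gone_strong x : exists n, gjoin x (Nat.iter n (gadd gone) gzero) = Nat.iter n (gadd gone) gzero.
Proof.
  classes. destruct p as [p1 p2]. destruct (common_bound A p1 p2) as [N [_ [Hu1 [Hl2 _]]]].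
  exists (N + N). apply gjoinE. rewrite gones. apply gle_class. unfold ple. simpl.
  rewrite m_add0. apply (le_trans ML) with (ones A N); [exact Hu1|].
  rewrite <- (add_ones_mones A (ones A N) N), ones_add.
  apply m_le_add2; [apply (le_refl ML) | exact Hl2].
Qed.

Definition grothendieck : UAbLGroup Gr :=
  {| g_addA := gaddA; g_addC := gaddC; g_add0 := gadd0; g_addN := gaddN;
     g_joinA := joinA GrL; g_meetA := meetA GrL; g_joinC := joinC GrL; g_meetC := meetC GrL;
     g_absJ := join_meetK GrL; g_absM := meet_joinK GrL;
     g_mono := gle_add; g_one_ge0 := gone_ge0; g_strong := gone_strong |}.

Lemma cancellative_embeds_in_ulgroup : embeds_in_ulgroup A.
Proof.
  exists Gr, grothendieck, (fun a => cls (a, zero)). simpl.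
  repeat split; try reflexivity.
  - intros a b Hab. apply class_eqP in Hab. unfold peq in Hab. simpl in Hab.
    rewrite !m_add0 in Hab. exact Hab.
  - intros a b. rewrite gadd_class. apply class_eqP. unfold peq. simpl.
    rewrite !m_add0. reflexivity.
  - intros a b. rewrite gjoin_class. apply class_eqP. unfold peq. simpl.
    rewrite !m_add0. reflexivity.
  - intros a b. rewrite gmeet_class. apply class_eqP. unfold peq. simpl.
    rewrite !m_add0. reflexivity.
  - unfold gone. rewrite gopp_class. apply class_eqP. unfold peq. simpl.
    rewrite m_add0. apply m_mone_one.
Qed.
End Grothendieck.

Definition g_lattice G (L : UAbLGroup G) : lattice_laws (g_join L) (g_meet L) :=
  {| joinA := g_joinA L; meetA := g_meetA L; joinC := g_joinC L; meetC := g_meetC L;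
     join_meetK := g_absJ L; meet_joinK := g_absM L |}.

Definition g_monoid G (L : UAbLGroup G) : comm_monoid_laws (g_add L) (g_zero L) :=
  {| addA := g_addA L; addC := g_addC L; add0 := g_add0 L |}.

Section UnitalLGroupFacts.
Variables (G : Type) (L : UAbLGroup G).
Local Notation "x ⊞ y" := (g_add L x y) (at level 50, left associativity).
Local Notation "x ⊔ y" := (g_join L x y) (at level 40, left associativity).
Local Notation "x ⊓ y" := (g_meet L x y) (at level 40, left associativity).
Local Notation "⊟ x" := (g_opp L x) (at level 35, right associativity).
Local Notation "x ≤ y" := (le (g_join L) x y) (at level 70).
Local Notation zero := (g_zero L).
Local Notation one := (g_one L).
Let GL := g_lattice L.
Let GC := g_monoid L.

Lemma g_le_add2 x y z w : x ≤ y -> z ≤ w -> x ⊞ z ≤ y ⊞ w.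
Proof. apply (le_add2 GL GC (g_mono L)). Qed.

Lemma g_le_addl x y z : x ≤ y -> z ⊞ x ≤ z ⊞ y.
Proof. apply g_le_add2, (le_refl GL). Qed.

Lemma g_addK x y : x ⊞ y ⊞ ⊟ y = x.
Proof. rewrite <- g_addA, g_addN. apply g_add0. Qed.

Lemma g_addNK x y : y ⊞ (⊟ y ⊞ x) = x.
Proof. rewrite g_addA, g_addN. apply (add0l GC). Qed.

Lemma g_le_subr x y z : x ⊞ z ≤ y -> x ≤ y ⊞ ⊟ z.
Proof. intro H. rewrite <- (g_addK x z). apply (g_mono L), H. Qed.

Lemma g_addJ z x y : z ⊞ (x ⊔ y) = (z ⊞ x) ⊔ (z ⊞ y).
Proof.
  apply (le_anti GL).
  - rewrite <- (g_addNK ((z ⊞ x) ⊔ (z ⊞ y)) z), <- (g_addC L _ (⊟ z)).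
    apply g_le_addl, (join_lub GL); apply g_le_subr; rewrite g_addC;
      [apply (le_joinl GL) | apply (le_joinr GL)].
  - apply (join_lub GL); apply g_le_addl; [apply (le_joinl GL) | apply (le_joinr GL)].
Qed.

Lemma g_le_subl x y z : x ≤ y ⊞ z -> x ⊞ ⊟ z ≤ y.
Proof. intro H. rewrite <- (g_addK y z). apply (g_mono L), H. Qed.

Lemma g_addM z x y : z ⊞ (x ⊓ y) = (z ⊞ x) ⊓ (z ⊞ y).
Proof.
  apply (le_anti GL).
  - apply (meet_glb GL); apply g_le_addl; [apply (le_meetl GL) | apply (le_meetr GL)].
  - rewrite <- (g_addNK ((z ⊞ x) ⊓ (z ⊞ y)) z) at 1. rewrite <- (g_addC L _ (⊟ z)).
    apply g_le_addl, (meet_glb GL); apply g_le_subl.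
    + rewrite (g_addC L x). apply (le_meetl GL).
    + rewrite (g_addC L y). apply (le_meetr GL).
Qed.

Lemma g_opp_unique x y : x ⊞ y = zero -> y = ⊟ x.
Proof. intro H. rewrite <- (g_addNK y x), (g_addC L (⊟ x)), g_addA, H. apply (add0l GC). Qed.

Lemma g_oppK x : ⊟ ⊟ x = x.
Proof. symmetry. apply g_opp_unique. rewrite g_addC. apply g_addN. Qed.

Lemma g_oppD x y : ⊟ (x ⊞ y) = ⊟ x ⊞ ⊟ y.
Proof.
  symmetry. apply g_opp_unique. rewrite (addACA GC), !g_addN. apply g_add0.
Qed.

Lemma g_opp0 : ⊟ zero = zero.
Proof. symmetry. apply g_opp_unique, g_add0. Qed.

Lemma g_opp_le x y : x ≤ y -> ⊟ y ≤ ⊟ x.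
Proof.
  intro H. pose proof (g_mono L x (⊟ x ⊞ ⊟ y) H) as Hs.
  rewrite g_addNK, (addCA GC y), g_addN, g_add0 in Hs. exact Hs.
Qed.

Lemma g_oppJ x y : ⊟ (x ⊔ y) = ⊟ x ⊓ ⊟ y.
Proof.
  apply (le_anti GL).
  - apply (meet_glb GL); apply g_opp_le; [apply (le_joinl GL) | apply (le_joinr GL)].
  - rewrite <- (g_oppK (⊟ x ⊓ ⊟ y)). apply g_opp_le, (join_lub GL).
    + rewrite <- (g_oppK x) at 1. apply g_opp_le, (le_meetl GL).
    + rewrite <- (g_oppK y) at 1. apply g_opp_le, (le_meetr GL).
Qed.

Lemma g_oppM x y : ⊟ (x ⊓ y) = ⊟ x ⊔ ⊟ y.
Proof. rewrite <- (g_oppK (⊟ x ⊔ ⊟ y)), g_oppJ, !g_oppK. reflexivity. Qed.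

Lemma g_one_sub_sub x : one ⊞ ⊟ (one ⊞ ⊟ x) = x.
Proof. rewrite g_oppD, g_oppK, g_addNK. reflexivity. Qed.

Definition in_unit_interval g := zero ≤ g /\ g ≤ one.
Definition unit_interval := sig in_unit_interval.
Local Notation val := (@proj1_sig G in_unit_interval).

Lemma unit_interval_ext (x y : unit_interval) : val x = val y -> x = y.
Proof. destruct x as [x Hx], y as [y Hy]. simpl. intro H. apply subset_eq_compat, H. Qed.

Lemma in_unit_interval_oplus (x y : unit_interval) : in_unit_interval ((val x ⊞ val y) ⊓ one).
Proof.
  destruct (proj2_sig x) as [Hx _], (proj2_sig y) as [Hy _]. split; [|apply (le_meetr GL)].
  apply (meet_glb GL); [|apply g_one_ge0].
  rewrite <- (g_add0 L zero). apply g_le_add2; assumption.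
Qed.

Lemma in_unit_interval_neg (x : unit_interval) : in_unit_interval (one ⊞ ⊟ val x).
Proof.
  destruct (proj2_sig x) as [Hx0 Hx1]. split.
  - rewrite <- (g_addN L (val x)). apply (g_mono L), Hx1.
  - rewrite <- (g_add0 L one) at 2. apply g_le_addl. rewrite <- g_opp0. apply g_opp_le, Hx0.
Qed.

Lemma in_unit_interval_zero : in_unit_interval zero.
Proof. split; [apply (le_refl GL) | apply g_one_ge0]. Qed.

Definition ui_oplus x y : unit_interval := exist _ _ (in_unit_interval_oplus x y).
Definition ui_neg x : unit_interval := exist _ _ (in_unit_interval_neg x).
Definition ui_zero : unit_interval := exist _ _ in_unit_interval_zero.
Definition ui_odot x y := ui_neg (ui_oplus (ui_neg x) (ui_neg y)).
Definition ui_join x y := ui_oplus (ui_odot x (ui_neg y)) y.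
Definition ui_meet x y := ui_neg (ui_join (ui_neg x) (ui_neg y)).

Lemma add_meet_one a b : zero ≤ a -> (a ⊞ (b ⊓ one)) ⊓ one = (a ⊞ b) ⊓ one.
Proof.
  intro Ha. rewrite g_addM, <- (g_meetA L). f_equal. rewrite (g_meetC L).
  apply (le_meetE GL). rewrite <- (add0l GC one) at 1. apply (g_mono L), Ha.
Qed.

Lemma ui_oplusA x y z : ui_oplus x (ui_oplus y z) = ui_oplus (ui_oplus x y) z.
Proof.
  apply unit_interval_ext. destruct (proj2_sig x) as [Hx _], (proj2_sig z) as [Hz _]. simpl.
  rewrite add_meet_one by exact Hx. rewrite (g_addC L ((val x ⊞ val y) ⊓ one)), add_meet_one by exact Hz.
  f_equal. rewrite (g_addC L (val z)), g_addA. reflexivity.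
Qed.

Lemma ui_oplusC x y : ui_oplus x y = ui_oplus y x.
Proof. apply unit_interval_ext. simpl. rewrite g_addC. reflexivity. Qed.

Lemma ui_oplus0 x : ui_oplus x ui_zero = x.
Proof.
  apply unit_interval_ext. destruct (proj2_sig x) as [_ Hx]. simpl.
  rewrite g_add0. apply (le_meetE GL), Hx.
Qed.

Lemma ui_negK x : ui_neg (ui_neg x) = x.
Proof. apply unit_interval_ext. apply g_one_sub_sub. Qed.

Lemma ui_oplus_neg0 x : ui_oplus x (ui_neg ui_zero) = ui_neg ui_zero.
Proof.
  apply unit_interval_ext. destruct (proj2_sig x) as [Hx _]. simpl. rewrite g_opp0, g_add0.
  rewrite (g_meetC L). apply (le_meetE GL). rewrite <- (add0l GC one) at 1.
  apply (g_mono L), Hx.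
Qed.

Lemma luk_identity a b : ((one ⊞ ⊟ ((one ⊞ ⊟ a ⊞ b) ⊓ one)) ⊞ b) ⊓ one = (a ⊔ b) ⊓ one.
Proof.
  f_equal. rewrite g_oppM, g_addJ, g_addN, g_oppD, g_oppD, g_oppK.
  rewrite (g_addC L _ b), g_addJ, g_add0. f_equal.
  replace (b ⊞ (one ⊞ (⊟ one ⊞ a ⊞ ⊟ b))) with (a ⊞ (one ⊞ ⊟ one) ⊞ (b ⊞ ⊟ b))
    by ac_reflexivity GC.
  rewrite !g_addN, !g_add0. reflexivity.
Qed.

Lemma ui_luk x y :
  ui_oplus (ui_neg (ui_oplus (ui_neg x) y)) y = ui_oplus (ui_neg (ui_oplus (ui_neg y) x)) x.
Proof. apply unit_interval_ext. simpl. rewrite !luk_identity, g_joinC. reflexivity. Qed.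

Definition Gamma_MV : MVAlgebra unit_interval :=
  {| mv_oplus := ui_oplus; mv_odot := ui_odot; mv_join := ui_join; mv_meet := ui_meet;
     mv_neg := ui_neg; mv_zero := ui_zero; mv_one := ui_neg ui_zero;
     mv_oplusA := ui_oplusA; mv_oplusC := ui_oplusC; mv_oplus0 := ui_oplus0;
     mv_negK := ui_negK; mv_oplus_neg0 := ui_oplus_neg0; mv_luk := ui_luk;
     mv_oneE := eq_refl; mv_odotE := fun _ _ => eq_refl;
     mv_joinE := fun _ _ => eq_refl; mv_meetE := fun _ _ => eq_refl |}.

Lemma val_oplus x y : val (ui_oplus x y) = (val x ⊞ val y) ⊓ one.
Proof. reflexivity. Qed.

Lemma val_neg x : val (ui_neg x) = one ⊞ ⊟ val x.
Proof. reflexivity. Qed.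

Lemma val_odot x y : val (ui_odot x y) = (val x ⊞ val y ⊞ ⊟ one) ⊔ zero.
Proof.
  unfold ui_odot. rewrite val_neg, val_oplus, !val_neg, g_oppM, g_addJ, g_addN. f_equal.
  rewrite !g_oppD, !g_oppK.
  replace (one ⊞ (⊟ one ⊞ val x ⊞ (⊟ one ⊞ val y)))
    with (val x ⊞ val y ⊞ ⊟ one ⊞ (one ⊞ ⊟ one)) by ac_reflexivity GC.
  rewrite g_addN, g_add0. reflexivity.
Qed.

Lemma val_join x y : val (ui_join x y) = val x ⊔ val y.
Proof.
  unfold ui_join. rewrite val_oplus, val_odot, val_neg.
  replace (val x ⊞ (one ⊞ ⊟ val y) ⊞ ⊟ one) with (val x ⊞ ⊟ val y ⊞ (one ⊞ ⊟ one))
    by ac_reflexivity GC.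
  rewrite g_addN, g_add0, (g_addC L _ (val y)), g_addJ, g_add0, (g_addC L (val x)), g_addNK.
  destruct (proj2_sig x) as [_ Hx], (proj2_sig y) as [_ Hy].
  apply (le_meetE GL), (join_lub GL); assumption.
Qed.

Lemma val_meet x y : val (ui_meet x y) = val x ⊓ val y.
Proof.
  unfold ui_meet. rewrite val_neg, val_join, !val_neg, g_oppJ, g_addM, !g_one_sub_sub.
  reflexivity.
Qed.

Lemma in_unit_interval_clamp g : in_unit_interval ((g ⊔ zero) ⊓ one).
Proof.
  split; [|apply (le_meetr GL)].
  apply (meet_glb GL); [apply (le_joinr GL) | apply g_one_ge0].
Qed.

Definition clamp g : unit_interval := exist _ _ (in_unit_interval_clamp g).

Lemma clamp_val g (x : unit_interval) : g = val x -> clamp g = x.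
Proof.
  intro Hg. apply unit_interval_ext. simpl. subst g.
  destruct (proj2_sig x) as [Hx0 Hx1].
  rewrite (g_joinC L), Hx0. apply (le_meetE GL), Hx1.
Qed.

Lemma Gamma_embeds_of_hom M (A : UCDLMonoid M) (f : M -> G) :
  (forall x y, f x = f y -> x = y) ->
  (forall x y, f (m_add A x y) = f x ⊞ f y) ->
  (forall x y, f (m_join A x y) = f x ⊔ f y) ->
  (forall x y, f (m_meet A x y) = f x ⊓ f y) ->
  f (m_zero A) = zero -> f (m_one A) = one -> f (m_mone A) = ⊟ one ->
  Gamma_embeds_in_MV A.
Proof.
  intros Hinj Hadd Hjoin Hmeet Hzero Hone Hmone.
  assert (Hval : forall x, in_Gamma A x -> val (clamp (f x)) = f x).
  { intros x [H0x Hx1].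
    assert (Hfx : in_unit_interval (f x)).
    { split; unfold le.
      - rewrite <- Hzero, <- Hjoin, H0x. reflexivity.
      - rewrite <- Hone, <- Hjoin, Hx1. reflexivity. }
    rewrite (clamp_val (exist _ (f x) Hfx)); reflexivity. }
  exists unit_interval, Gamma_MV, (fun x => clamp (f x)).
  cbn [mv_oplus mv_odot mv_join mv_meet mv_zero mv_one Gamma_MV].
  repeat split.
  - intros x y Hx Hy Hxy. apply Hinj. rewrite <- (Hval x Hx), <- (Hval y Hy), Hxy. reflexivity.
  - intros x y Hx Hy. apply clamp_val. rewrite val_oplus, (Hval x Hx), (Hval y Hy).
    unfold Gamma_oplus. rewrite Hmeet, Hadd, Hone. reflexivity.
  - intros x y Hx Hy. apply clamp_val. rewrite val_odot, (Hval x Hx), (Hval y Hy).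
    unfold Gamma_odot. rewrite Hjoin, !Hadd, Hmone, Hzero. reflexivity.
  - intros x y Hx Hy. apply clamp_val. rewrite val_join, (Hval x Hx), (Hval y Hy). apply Hjoin.
  - intros x y Hx Hy. apply clamp_val. rewrite val_meet, (Hval x Hx), (Hval y Hy). apply Hmeet.
  - apply clamp_val. exact Hzero.
  - apply clamp_val. rewrite val_neg. simpl. rewrite g_opp0, g_add0. exact Hone.
Qed.
End UnitalLGroupFacts.

Lemma Gamma_embeds_of_embeds_in_ulgroup M (A : UCDLMonoid M) :
  embeds_in_ulgroup A -> Gamma_embeds_in_MV A.
Proof.
  intros (G & L & f & Hinj & Hadd & Hjoin & Hmeet & Hzero & Hone & Hmone).
  exact (Gamma_embeds_of_hom L A f Hinj Hadd Hjoin Hmeet Hzero Hone Hmone).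
Qed.

Lemma Gamma_cancellative_of_Gamma_embeds M (A : UCDLMonoid M) :
  Gamma_embeds_in_MV A -> Gamma_cancellative A.
Proof.
  intros (B & V & f & Hinj & Hoplus & Hodot & _) x y z Hx Hy Hz Hxz.
  apply Hinj; [exact Hx | exact Hy |].
  apply (mv_cancel V) with (f z).
  - rewrite <- (Hoplus x z), <- (Hoplus y z) by assumption. unfold Gamma_oplus. rewrite Hxz.
    reflexivity.
  - rewrite <- (Hodot x z), <- (Hodot y z) by assumption. unfold Gamma_odot. rewrite Hxz.
    reflexivity.
Qed.

Theorem mainTheorem5 (M : Type) (A : UCDLMonoid M) :
  embeds_in_ulgroup A <-> Gamma_embeds_in_MV A.
Proof.
  split.
  - apply Gamma_embeds_of_embeds_in_ulgroup.
  - intro HGamma. apply cancellative_embeds_in_ulgroup, cancellative_of_Gamma_cancellative.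
    exact (Gamma_cancellative_of_Gamma_embeds HGamma).
Qed.
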